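(* For $n\ge2$, there is a well-defined surjective homomorphism $\psi_H:TVH_n\to A_n$ with $\psi_H(x_{kl})=e$ ($1\le k\ne l\le n$) and $\psi_H(\gamma_j)=\gamma_j$, which is the identity on $A_n$. Its kernel $HL_n=\ker\psi_H$ is generated by the elements $x_{ij}^{(0)}=x_{ij}$, $x_{ij}^{(i)}=x_{ij}^{\gamma_i}$, $x_{ij}^{(j)}=x_{ij}^{\gamma_j}$, $x_{ij}^{(ij)}=x_{ij}^{\gamma_i\gamma_j}$ for $1\le i<j\le n$, and $TVH_n=HL_n\rtimes A_n$.
   Context: For $n\ge 2$, the twisted virtual braid group $TVB_n$ is the group with generators $\sigma_1,\dots,\sigma_{n-1}$, $\rho_1,\dots,\rho_{n-1}$, $\gamma_1,\dots,\gamma_n$ and defining relations: $\sigma_i\sigma_{i+1}\sigma_i=\sigma_{i+1}\sigma_i\sigma_{i+1}$ ($1\le i\le n-2$); $\sigma_i\sigma_j=\sigma_j\sigma_i$ ($|i-j|\ge 2$); $\rho_i^2=1$; $\rho_i\rho_j=\rho_j\rho_i$ ($|i-j|\ge2$); $\rho_i\rho_{i+1}\rho_i=\rho_{i+1}\rho_i\rho_{i+1}$ ($1\le i\le n-2$); $\sigma_i\rho_j=\rho_j\sigma_i$ ($|i-j|\ge 2$); $\rho_i\rho_{i+1}\sigma_i=\sigma_{i+1}\rho_i\rho_{i+1}$ ($1\le i\le n-2$); $\gamma_i^2=1$ and $\gamma_i\gamma_j=\gamma_j\gamma_i$ (all $i,j$); $\gamma_j\rho_i=\rho_i\gamma_j$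 and $\gamma_j\sigma_i=\sigma_i\gamma_j$ for $j\notin\{i,i+1\}$; $\rho_i\gamma_i=\gamma_{i+1}\rho_i$ ($1\le i\le n-1$); $\rho_i\sigma_i\rho_i=\gamma_{i+1}\gamma_i\sigma_i\gamma_i\gamma_{i+1}$ ($1\le i\le n-1$). $\varphi_H:TVB_n\to S_n$ is the homomorphism with $\sigma_i\mapsto e$, $\rho_i\mapsto(i,i+1)$, $\gamma_j\mapsto e$, and $TVH_n=\ker\varphi_H$. $A_n=\langle\gamma_1,\dots,\gamma_n\rangle\le TVH_n$. In $TVB_n$ define $x_{i,i+1}=\sigma_i$, $x_{i+1,i}=\rho_i\sigma_i\rho_i$ ($1\le i\le n-1$), and for $1\le i<j-1\le n-1$: $x_{ij}=\rho_{j-1}\cdots\rho_{i+1}\sigma_i\rho_{i+1}\cdots\rho_{j-1}$, $x_{ji}=\rho_{j-1}\cdots\rho_{i+1}\rho_i\sigma_i\rho_i\rho_{i+1}\cdots\rho_{j-1}$; the $x_{kl}$ and $\gamma_j$ generate $TVH_n$. Conjugation notation: $a^b=b^{-1}ab$. *)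

(* the group TVB_n is encoded by words in the
   generators and the congruence generated by free cancellation and the
   defining relations. Indices are 1-based as in the paper. *)
From Stdlib Require List.
From mathcomp Require Import all_boot.
Set Implicit Arguments. Unset Strict Implicit. Unset Printing Implicit Defensive.

Inductive gen := Sig of nat | Rho of nat | Gam of nat.

(* a letter is a generator with an inversion flag (true = inverse) *)
Definition letter := (gen * bool)%type.
Definition word := seq letter.

Definition sg i : letter := (Sig i, false).
Definition rh i : letter := (Rho i, false).
Definition gm j : letter := (Gam j, false).

Definition winv (w : word) : word := rev (map (fun l => (l.1, ~~ l.2)) w).

Definition conjw (a b : word) : word := winv b ++ a ++ b.

Definition gen_ok (n : nat) (x : gen) : bool :=
  match x with
  | Sig i => (1 <= i) && (i <= n - 1)
  | Rho i => (1 <= i) && (i <= n - 1)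
  | Gam j => (1 <= j) && (j <= n)
  end.

Definition valid (n : nat) (w : word) : bool := all (fun l => gen_ok n l.1) w.

Definition far (i j : nat) : bool := (i.+2 <= j) || (j.+2 <= i).

Inductive tvb_rel (n : nat) : word -> word -> Prop :=
| r_braid_s i : 1 <= i -> i <= n - 2 ->
    tvb_rel n [:: sg i; sg i.+1; sg i] [:: sg i.+1; sg i; sg i.+1]
| r_comm_s i j : 1 <= i <= n - 1 -> 1 <= j <= n - 1 -> far i j ->
    tvb_rel n [:: sg i; sg j] [:: sg j; sg i]
| r_inv_r i : 1 <= i <= n - 1 -> tvb_rel n [:: rh i; rh i] [::]
| r_comm_r i j : 1 <= i <= n - 1 -> 1 <= j <= n - 1 -> far i j ->
    tvb_rel n [:: rh i; rh j] [:: rh j; rh i]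
| r_braid_r i : 1 <= i -> i <= n - 2 ->
    tvb_rel n [:: rh i; rh i.+1; rh i] [:: rh i.+1; rh i; rh i.+1]
| r_comm_sr i j : 1 <= i <= n - 1 -> 1 <= j <= n - 1 -> far i j ->
    tvb_rel n [:: sg i; rh j] [:: rh j; sg i]
| r_mixed i : 1 <= i -> i <= n - 2 ->
    tvb_rel n [:: rh i; rh i.+1; sg i] [:: sg i.+1; rh i; rh i.+1]
| r_inv_g j : 1 <= j <= n -> tvb_rel n [:: gm j; gm j] [::]
| r_comm_g i j : 1 <= i <= n -> 1 <= j <= n ->
    tvb_rel n [:: gm i; gm j] [:: gm j; gm i]
| r_comm_gr i j : 1 <= i <= n - 1 -> 1 <= j <= n -> j != i -> j != i.+1 ->
    tvb_rel n [:: gm j; rh i] [:: rh i; gm j]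
| r_comm_gs i j : 1 <= i <= n - 1 -> 1 <= j <= n -> j != i -> j != i.+1 ->
    tvb_rel n [:: gm j; sg i] [:: sg i; gm j]
| r_rg i : 1 <= i <= n - 1 ->
    tvb_rel n [:: rh i; gm i] [:: gm i.+1; rh i]
| r_rsr i : 1 <= i <= n - 1 ->
    tvb_rel n [:: rh i; sg i; rh i] [:: gm i.+1; gm i; sg i; gm i; gm i.+1].

Inductive weq (n : nat) : word -> word -> Prop :=
| weq_refl w : weq n w w
| weq_sym w1 w2 : weq n w1 w2 -> weq n w2 w1
| weq_trans w1 w2 w3 : weq n w1 w2 -> weq n w2 w3 -> weq n w1 w3
| weq_rel u v l r : tvb_rel n l r -> weq n (u ++ l ++ v) (u ++ r ++ v)
| weq_free u v x b : weq n (u ++ [:: (x, b); (x, ~~ b)] ++ v) (u ++ v).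

(* phi_H : TVB_n -> S_n, sigma_i |-> e, rho_i |-> (i,i+1), gamma_j |-> e,
   realized as an action on {1,..,n} *)
Definition swap (i k : nat) : nat :=
  if k == i then i.+1 else if k == i.+1 then i else k.

Definition act (w : word) (k : nat) : nat :=
  foldr (fun l k => match l.1 with Rho i => swap i k | _ => k end) k w.

(* membership in TVH_n = ker phi_H *)
Definition in_TVH (n : nat) (w : word) : Prop :=
  valid n w /\ forall k, 1 <= k <= n -> act w k = k.

(* words in the gamma_j : representatives of elements of A_n *)
Definition gamma_word (n : nat) (w : word) : Prop :=
  valid n w /\ all (fun l => if l.1 is Gam _ then true else false) w.

Definition rhos (i j : nat) : word := [seq rh k | k <- rev (iota i.+1 (j - i - 1))].

Definition xw (i j : nat) : word :=
  if i < j then rhos i j ++ [:: sg i] ++ rev (rhos i j)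
  else rhos j i ++ [:: rh j; sg j; rh j] ++ rev (rhos j i).

Definition hl_gen (n : nat) (w : word) : Prop :=
  exists i j, [/\ 1 <= i, i < j, j <= n &
    [\/ w = xw i j, w = conjw (xw i j) [:: gm i], w = conjw (xw i j) [:: gm j]
      | w = conjw (xw i j) [:: gm i; gm j]]].

Definition gen_by (n : nat) (P : word -> Prop) (w : word) : Prop :=
  exists ws : seq (bool * word),
    (forall p, List.In p ws -> P p.2) /\
    weq n w (flatten [seq (if p.1 then winv p.2 else p.2) | p <- ws]).

From mathcomp Require Import all_boot zify.
From Stdlib Require Import Setoid.
Set Implicit Arguments. Unset Strict Implicit. Unset Printing Implicit Defensive.

(* TVB_n acts on the signed positions {1,..,n} x bool: rho_i swaps the positions
   i and i+1, gamma_j flips the sign at position j, and sigma_i acts trivially.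
   TVH_n is the subgroup fixing every position, and psi_H records which signs an
   element of TVH_n flips, as the corresponding product of gamma_j; since A_n is
   (Z/2)^n, this is a homomorphism onto A_n that is the identity there, and its
   kernel consists of the elements acting trivially.
   Conversely, Reidemeister-Schreier rewriting writes every word as h g c with h a
   product of the x_ij^(S), g a word in the gamma_j and c a word in the rho_i: a
   letter sigma_i met after g c is replaced by the conjugate (g c) sigma_i (g c)^-1,
   and c sigma_i c^-1 = x_{c(i) c(i+1)} while conjugating x_ab by gammas gives some
   x_ab^(S) (or x_ba^(S)). If the word acts trivially, then c induces the identity
   permutation, hence is trivial by the Coxeter presentation of S_n, and g flips no
   sign, hence is trivial as well. *)

#[local] Hint Resolve weq_refl : core.

Lemma weq_ctx n p q w1 w2 : weq n w1 w2 -> weq n (p ++ w1 ++ q) (p ++ w2 ++ q).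
Proof.
elim=> {w1 w2} [w | ? ? _ H | ? ? ? _ H1 _ H2 | u v l r H | u v x b].
- exact: weq_refl.
- exact: weq_sym.
- exact: weq_trans H1 H2.
- by have := weq_rel (p ++ u) (v ++ q) H; rewrite -!catA.
- by have := weq_free n (p ++ u) (v ++ q) x b; rewrite -!catA.
Qed.

Add Parametric Relation n : word (weq n)
  reflexivity proved by (@weq_refl n)
  symmetry proved by (@weq_sym n)
  transitivity proved by (@weq_trans n) as weq_setoid.

Add Parametric Morphism n : (@cat letter) with signature
  weq n ==> weq n ==> weq n as cat_weq.
Proof.
move=> u u' Hu v v' Hv; apply: weq_trans (_ : weq n (u' ++ v) _).
  by have := weq_ctx [::] v Hu.
by have := weq_ctx u' [::] Hv; rewrite !cats0.
Qed.

Add Parametric Morphism n l : (cons l) with signature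
  weq n ==> weq n as cons_weq.
Proof. by move=> u v H; have := weq_ctx [:: l] [::] H; rewrite !cats0. Qed.

Lemma winv_cat u v : winv (u ++ v) = winv v ++ winv u.
Proof. by rewrite /winv map_cat rev_cat. Qed.

Lemma winv_cons l u : winv (l :: u) = winv u ++ [:: (l.1, ~~ l.2)].
Proof. by rewrite -cat1s winv_cat. Qed.

Lemma winvK : involutive winv.
Proof.
move=> u; rewrite /winv map_rev revK -map_comp.
by elim: u => //= [[x b] u] ->; rewrite negbK.
Qed.

Section TwistedVirtualBraidGroup.

Variable n : nat.

Local Notation "u ≡ v" := (weq n u v) (at level 70).

Lemma weq_rel_head l r w : tvb_rel n l r -> l ++ w ≡ r ++ w.
Proof. by move=> H; have := weq_rel [::] w H. Qed.

Lemma weq_free_head x b w : (x, b) :: (x, ~~ b) :: w ≡ w.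
Proof. by have := weq_free n [::] w x b. Qed.

Lemma catwV u : u ++ winv u ≡ [::].
Proof.
elim: u => [|[x b] u IH]; first exact: weq_refl.
rewrite winv_cons -cat1s -!catA [u ++ _]catA IH /=.
exact: weq_free_head.
Qed.

Lemma catVw u : winv u ++ u ≡ [::].
Proof. by have := catwV (winv u); rewrite winvK. Qed.

Lemma catKw u w : winv u ++ u ++ w ≡ w.
Proof. by rewrite catA catVw. Qed.

Lemma weq_winv u v : u ≡ v -> winv u ≡ winv v.
Proof.
move=> H; apply: weq_trans (_ : winv u ++ v ++ winv v ≡ _).
  by rewrite catwV cats0.
by rewrite -{1}H catKw.
Qed.

Add Parametric Morphism : winv with signature
  weq n ==> weq n as winv_weq.
Proof. exact: weq_winv. Qed.

Lemma valid_cat m a b : valid m (a ++ b) = valid m a && valid m b.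
Proof. exact: all_cat. Qed.

Lemma valid_rev m w : valid m (rev w) = valid m w.
Proof. exact: all_rev. Qed.

Lemma valid_winv m w : valid m (winv w) = valid m w.
Proof. by rewrite /valid /winv all_rev all_map. Qed.

(** * The action on signed positions *)

Ltac case_eqs := repeat match goal with |- context [?x == ?y] =>
  lazymatch x with context [_ == _] => fail | _ =>
  lazymatch y with context [_ == _] => fail | _ =>
    case: (@eqP _ x y) => ? end end end.

Lemma swapK i : involutive (swap i).
Proof. by move=> k; rewrite /swap; case_eqs; lia. Qed.

Lemma swap_l i : swap i i = i.+1.
Proof. by rewrite /swap eqxx. Qed.

Lemma swap_r i : swap i i.+1 = i.
Proof. by rewrite /swap; case_eqs; lia. Qed.

Lemma swap_fix i k : k != i -> k != i.+1 -> swap i k = k.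
Proof. by move=> H1 H2; rewrite /swap (negbTE H1) (negbTE H2). Qed.

Lemma swap_range m i k : 1 <= i <= m - 1 -> 1 <= k <= m -> 1 <= swap i k <= m.
Proof. by rewrite /swap; case_eqs; lia. Qed.

Definition letter_act (l : letter) (p : nat * bool) : nat * bool :=
  match l.1 with
  | Sig _ => p
  | Rho i => (swap i p.1, p.2)
  | Gam j => (p.1, (p.1 == j) (+) p.2)
  end.

Definition sact (w : word) (p : nat * bool) : nat * bool := foldr letter_act p w.

Definition twist (w : word) (k : nat) : bool := (sact w (k, false)).2.

Lemma sact_cat u v p : sact (u ++ v) p = sact u (sact v p).
Proof. exact: foldr_cat. Qed.

Lemma letter_actK l : involutive (letter_act l).
Proof. by case: l => [[i|i|j] b] [k c]; rewrite /letter_act /= ?swapK ?addKb. Qed.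

Lemma sact_revK w : cancel (sact w) (sact (rev w)).
Proof. by elim: w => //= l w IH p; rewrite rev_cons -cats1 sact_cat /= letter_actK IH. Qed.

Lemma sact_revKV w : cancel (sact (rev w)) (sact w).
Proof. by have := sact_revK (rev w); rewrite revK. Qed.

Lemma sact_winv w : sact (winv w) =1 sact (rev w).
Proof.
elim: w => //= l w IH p.
by rewrite winv_cons rev_cons -cats1 !sact_cat IH.
Qed.

Lemma tvb_rel_sact l r : tvb_rel n l r -> sact l =1 sact r.
Proof.
move=> H [k c]; case: H => /=; intros;
  repeat match goal with H : is_true (far _ _) |- _ => move: H; rewrite /far => /orP [?|?] end;
  rewrite /letter_act /= /swap; case_eqs => /=; rewrite ?negbK;
  try (exfalso; lia); try (congr pair; lia).
Qed.

Lemma weq_sact u v : u ≡ v -> sact u =1 sact v.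
Proof.
elim=> {u v} [// | ? ? _ H | ? ? ? _ H1 _ H2 | u v l r H | u v x b] p.
- by rewrite H.
- by rewrite H1 H2.
- by rewrite !sact_cat (tvb_rel_sact H).
- by rewrite !sact_cat /= letter_actK.
Qed.

Lemma sactE w k b : sact w (k, b) = (act w k, b (+) twist w k).
Proof.
elim: w b => [|l w IH] b; first by rewrite /twist /= addbF.
rewrite {1}/twist /= !IH; case: l => [[i|i|j] f] //=.
by rewrite /letter_act /= addbCA.
Qed.

Lemma weq_act u v : u ≡ v -> act u =1 act v.
Proof. by move=> H k; have := weq_sact H (k, false); rewrite !sactE => -[]. Qed.

Lemma weq_twist u v : u ≡ v -> twist u =1 twist v.
Proof. by move=> H k; rewrite /twist (weq_sact H). Qed.

Lemma act_cat u v k : act (u ++ v) k = act u (act v k).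
Proof. exact: foldr_cat. Qed.

Lemma act_revK w : cancel (act w) (act (rev w)).
Proof. by move=> k; have := sact_revK w (k, false); rewrite !sactE => -[]. Qed.

Lemma act_revKV w : cancel (act (rev w)) (act w).
Proof. by have := act_revK (rev w); rewrite revK. Qed.

Lemma act_inj w : injective (act w).
Proof. exact: can_inj (act_revK w). Qed.

Lemma act_range m w k : valid m w -> 1 <= k <= m -> 1 <= act w k <= m.
Proof.
elim: w => //= [[[i|i|j] f]] w IH //= /andP [Hg Hw] Hk; try exact: IH.
by apply: swap_range => //; apply: IH.
Qed.

Lemma gamma_invo j w : 1 <= j <= n -> gm j :: gm j :: w ≡ w.
Proof. by move=> H; have := weq_rel_head w (r_inv_g H). Qed.

Lemma gamma_comm i j w : 1 <= i <= n -> 1 <= j <= n ->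
  gm i :: gm j :: w ≡ gm j :: gm i :: w.
Proof. by move=> Hi Hj; have := weq_rel_head w (r_comm_g Hi Hj). Qed.

Lemma gamma_letter j f w : 1 <= j <= n -> (Gam j, f) :: w ≡ gm j :: w.
Proof.
case: f => // H; rewrite -{1}(gamma_invo w H).
exact: weq_free_head (Gam j) true (gm j :: w).
Qed.

Definition gamma_wordb (a : word) : bool :=
  all (fun l => if l.1 is Gam j then 1 <= j <= n else false) a.

Lemma gamma_wordP a : reflect (gamma_word n a) (gamma_wordb a).
Proof.
suff -> : gamma_wordb a = valid n a && all (fun l => if l.1 is Gam _ then true else false) a.
  exact: andP.
by rewrite -all_predI; apply: eq_all => -[[i|i|j] f] /=; rewrite ?andbT ?andbF.
Qed.

Lemma gamma_wordb_cat a b : gamma_wordb (a ++ b) = gamma_wordb a && gamma_wordb b.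
Proof. exact: all_cat. Qed.

Lemma gamma_wordb_winv a : gamma_wordb (winv a) = gamma_wordb a.
Proof. by rewrite /gamma_wordb /winv all_rev all_map. Qed.

Lemma gamma_comm_word a j w : gamma_wordb a -> 1 <= j <= n ->
  gm j :: a ++ w ≡ a ++ gm j :: w.
Proof.
move=> Ha Hj; elim: a Ha => //= [[[i|i|k] f]] a IH //= /andP [Hk Ha].
by rewrite gamma_letter // gamma_comm // IH // -gamma_letter.
Qed.

Lemma sact_gamma a k b : gamma_wordb a -> sact a (k, b) = (k, b (+) twist a k).
Proof.
rewrite sactE => Ha; congr pair.
by elim: a Ha => //= [[[i|i|j] f]] a IH //= /andP [_ /IH].
Qed.

Lemma twist_gamma_cons j f a k : gamma_wordb a ->
  twist ((Gam j, f) :: a) k = (k == j) (+) twist a k.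
Proof. by move=> Ha; rewrite {1}/twist /= sact_gamma. Qed.

Lemma twist_has_gamma a k : gamma_wordb a -> twist a k ->
  has (fun l => if l.1 is Gam j then j == k else false) a.
Proof.
elim: a => [|[[i|i|j] f] a IH] //= /andP [_ Ha].
by rewrite twist_gamma_cons // eq_sym; case: eqP => //= _; exact: IH.
Qed.

Lemma gamma_weq_nil a : gamma_wordb a ->
  (forall k, 1 <= k <= n -> twist a k = false) -> a ≡ [::].
Proof.
(* The leading gamma_k has a partner further on; bring them together and cancel. *)
have [m] := ubnP (size a); elim: m a => // m IH [|[[i|i|k] f] a] //= Hsize /andP [Hk Ha] Htw.
have Ka : twist a k by have := Htw k Hk; rewrite twist_gamma_cons // eqxx; case: twist.
have Hhas := twist_has_gamma Ha Ka; move: Hhas Ha Hsize Htw.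
case/split_find => [[[i|i|k'] g] u v] //= /eqP -> _.
rewrite cat_rcons gamma_wordb_cat => /andP [Hu Hv] Hsize Htw.
have E : (Gam k, f) :: u ++ (Gam k, g) :: v ≡ u ++ v.
  by rewrite gamma_letter // gamma_letter // gamma_comm_word // gamma_invo.
rewrite E; apply: IH.
- by move: Hsize; rewrite !size_cat /=; lia.
- by rewrite gamma_wordb_cat Hu; case/andP: Hv.
- by move=> j Hj; rewrite -(weq_twist E) Htw.
Qed.

Lemma gamma_weq a b : gamma_wordb a -> gamma_wordb b ->
  (forall k, 1 <= k <= n -> twist a k = twist b k) -> a ≡ b.
Proof.
elim: a b => [|[[i|i|j] f] a IH] b //=.
  by move=> _ Hb H; symmetry; apply: gamma_weq_nil => // k Hk; rewrite -H.
case/andP=> Hj Ha Hb H; rewrite gamma_letter // (IH (gm j :: b)) ?gamma_invo //=.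
- by rewrite Hj.
- by move=> k Hk; rewrite !twist_gamma_cons // -H // twist_gamma_cons // addKb.
Qed.

Definition gammas (t : nat -> bool) (s : seq nat) : word := [seq gm j | j <- s & t j].

Definition gamma_nf (t : nat -> bool) : word := gammas t (iota 1 n).

Lemma gamma_wordb_nf t : gamma_wordb (gamma_nf t).
Proof.
by rewrite /gamma_wordb all_map; apply/allP => j; rewrite mem_filter mem_iota /=; lia.
Qed.

Lemma sact_map_gamma s k b : sact (map gm s) (k, b) = (k, b (+) odd (count_mem k s)).
Proof.
elim: s => [|j s IH] /=; first by rewrite addbF.
by rewrite IH /letter_act /= oddD oddb eq_sym addbCA.
Qed.

Lemma twist_gammas t s k : uniq s -> twist (gammas t s) k = (k \in s) && t k.
Proof.
move=> Us; rewrite /twist sact_map_gamma count_uniq_mem ?filter_uniq // mem_filter /=.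
by case: (t k); case: (k \in s).
Qed.

Lemma twist_gamma_nf t k : 1 <= k <= n -> twist (gamma_nf t) k = t k.
Proof. by move=> Hk; rewrite twist_gammas ?iota_uniq // mem_iota; case: (t k); lia. Qed.

Lemma twist_cat_gamma u v k : gamma_wordb v -> twist (u ++ v) k = twist u k (+) twist v k.
Proof. by move=> Hv; rewrite {1}/twist sact_cat sact_gamma // sactE addbC. Qed.

Lemma twist_winv_gamma a k : gamma_wordb a -> twist (winv a) k = twist a k.
Proof.
move=> Ha; have := weq_twist (catwV a) k.
by rewrite twist_cat_gamma ?gamma_wordb_winv //; case: twist; case: twist.
Qed.

Definition rho_wordb (m : nat) (c : word) : bool :=
  all (fun l => if l.1 is Rho i then 1 <= i <= m else false) c.

Lemma rho_wordb_cat m a b : rho_wordb m (a ++ b) = rho_wordb m a && rho_wordb m b.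
Proof. exact: all_cat. Qed.

Lemma rho_wordb_rev m a : rho_wordb m (rev a) = rho_wordb m a.
Proof. exact: all_rev. Qed.

Lemma rho_wordb_valid m c : rho_wordb (m - 1) c -> valid m c.
Proof. by elim: c => //= [[[i|i|j] f]] c IH //= /andP [-> /IH]. Qed.

Lemma rho_wordb0 c : rho_wordb 0 c -> c = [::].
Proof. by case: c => //= [[[i|i|j] f]] c //= /andP []; lia. Qed.

Lemma act_rho_wordb_fix m c k : rho_wordb m c -> m.+1 < k -> act c k = k.
Proof.
elim: c => //= [[[i|i|j] f]] c IH //= /andP [Hi Hc] Hk.
by rewrite IH // /swap; case_eqs; lia.
Qed.

Lemma sact_rho_word m c k b : rho_wordb m c -> sact c (k, b) = (act c k, b).
Proof. by elim: c => //= [[[i|i|j] f]] c IH //= /andP [_ /IH ->]. Qed.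

Lemma rho_invo i w : 1 <= i <= n - 1 -> rh i :: rh i :: w ≡ w.
Proof. by move=> H; have := weq_rel_head w (r_inv_r H). Qed.

Lemma rho_letter i f w : 1 <= i <= n - 1 -> (Rho i, f) :: w ≡ rh i :: w.
Proof.
case: f => // H; rewrite -{1}(rho_invo w H).
exact: weq_free_head (Rho i) true (rh i :: w).
Qed.

Lemma rho_comm i j w : 1 <= i <= n - 1 -> 1 <= j <= n - 1 -> far i j ->
  rh i :: rh j :: w ≡ rh j :: rh i :: w.
Proof. by move=> Hi Hj Hf; have := weq_rel_head w (r_comm_r Hi Hj Hf). Qed.

Lemma sigma_rho_comm i j w : 1 <= i <= n - 1 -> 1 <= j <= n - 1 -> far i j ->
  sg i :: rh j :: w ≡ rh j :: sg i :: w.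
Proof. by move=> Hi Hj Hf; have := weq_rel_head w (r_comm_sr Hi Hj Hf). Qed.

Lemma rho_braid i w : 1 <= i -> i <= n - 2 ->
  rh i :: rh i.+1 :: rh i :: w ≡ rh i.+1 :: rh i :: rh i.+1 :: w.
Proof. by move=> H1 H2; have := weq_rel_head w (r_braid_r H1 H2). Qed.

Lemma rho_rho_sigma i w : 1 <= i -> i <= n - 2 ->
  rh i :: rh i.+1 :: sg i :: w ≡ sg i.+1 :: rh i :: rh i.+1 :: w.
Proof. by move=> H1 H2; have := weq_rel_head w (r_mixed H1 H2). Qed.

Lemma rho_sigma_rho i w : 1 <= i <= n - 1 ->
  rh i :: sg i :: rh i :: w ≡ gm i.+1 :: gm i :: sg i :: gm i :: gm i.+1 :: w.
Proof. by move=> H; have := weq_rel_head w (r_rsr H). Qed.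

Lemma rho_sigma_shift i w : 1 <= i -> i <= n - 2 ->
  rh i :: sg i.+1 :: rh i :: w ≡ rh i.+1 :: sg i :: rh i.+1 :: w.
Proof.
move=> H1 H2; have Hi : 1 <= i <= n - 1 by lia.
by rewrite -[X in _ ≡ X](rho_invo _ Hi) rho_rho_sigma // rho_invo //; lia.
Qed.

Lemma gamma_sigma_comm i j w : 1 <= i <= n - 1 -> 1 <= j <= n -> j != i -> j != i.+1 ->
  gm j :: sg i :: w ≡ sg i :: gm j :: w.
Proof. by move=> H1 H2 H3 H4; have := weq_rel_head w (r_comm_gs H1 H2 H3 H4). Qed.

Lemma rho_gamma i j w : 1 <= i <= n - 1 -> 1 <= j <= n ->
  rh i :: gm j :: w ≡ gm (swap i j) :: rh i :: w.
Proof.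
move=> Hi Hj; rewrite /swap; case: eqP => [->|ne1].
  by have := weq_rel_head w (r_rg Hi).
case: eqP => [->|ne2].
  rewrite -[X in _ ≡ X](rho_invo (gm i :: rh i :: w) Hi).
  by have := weq_rel_head (rh i :: w) (r_rg Hi) => /= ->; rewrite rho_invo.
by symmetry; have := weq_rel_head w (r_comm_gr Hi Hj (introN eqP ne1) (introN eqP ne2)).
Qed.

Lemma gamma_rho i j w : 1 <= i <= n - 1 -> 1 <= j <= n ->
  gm j :: rh i :: w ≡ rh i :: gm (swap i j) :: w.
Proof. by move=> Hi Hj; rewrite (rho_gamma w Hi (swap_range Hi Hj)) swapK. Qed.

Lemma rho_word_gamma c j w : rho_wordb (n - 1) c -> 1 <= j <= n ->
  c ++ gm j :: w ≡ gm (act c j) :: c ++ w.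
Proof.
move=> Hc Hj; elim: c Hc => //= [[[i|i|k] f]] c IH //= /andP [Hi Hc].
rewrite rho_letter // IH // rho_gamma // -?rho_letter //.
by apply: act_range => //; apply: rho_wordb_valid.
Qed.

Lemma gamma_rho_word c j w : rho_wordb (n - 1) c -> 1 <= j <= n ->
  gm j :: c ++ w ≡ c ++ gm (act (rev c) j) :: w.
Proof.
move=> Hc Hj; rewrite rho_word_gamma ?act_revKV //.
by apply: act_range => //; rewrite valid_rev; apply: rho_wordb_valid.
Qed.

Definition rho_word_far (i : nat) (c : word) : bool :=
  all (fun l => if l.1 is Rho j then far i j else false) c.

Lemma rho_comm_word i c w : 1 <= i <= n - 1 -> rho_wordb (n - 1) c -> rho_word_far i c ->
  rh i :: c ++ w ≡ c ++ rh i :: w.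
Proof.
move=> Hi; elim: c => //= [[[j|j|j] f]] c IH //= /andP [Hj Hc] /andP [Hf Hl].
by rewrite rho_letter // rho_comm // IH // -rho_letter.
Qed.

Definition rho_range (a b : nat) : word := map rh (rev (iota a (b - a))).

Lemma rho_range_nil a b : b <= a -> rho_range a b = [::].
Proof. by move=> H; rewrite /rho_range (_ : b - a = 0) //; lia. Qed.

Lemma rho_rangeS a b : a <= b -> rho_range a b.+1 = rh b :: rho_range a b.
Proof.
move=> H; rewrite /rho_range (_ : b.+1 - a = (b - a) + 1); last by lia.
by rewrite iotaD rev_cat /= (_ : a + (b - a) = b) //; lia.
Qed.

Lemma rho_range_low a b : a < b -> rho_range a b = rho_range a.+1 b ++ [:: rh a].
Proof.
move=> H; rewrite /rho_range (_ : b - a = (b - a.+1).+1); last by lia.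
by rewrite /= rev_cons map_rcons cats1.
Qed.

Lemma rho_range_split a b c : a <= b <= c ->
  rho_range a c = rho_range b c ++ rho_range a b.
Proof.
move=> H; rewrite /rho_range (_ : c - a = (b - a) + (c - b)); last by lia.
by rewrite iotaD rev_cat map_cat (_ : a + (b - a) = b) //; lia.
Qed.

Lemma all_rho_range (P : letter -> bool) a b :
  (forall j, a <= j < b -> P (rh j)) -> all P (rho_range a b).
Proof.
move=> H; rewrite /rho_range all_map all_rev; apply/allP => j.
by rewrite mem_iota => Hj /=; apply: H; lia.
Qed.

Lemma rho_wordb_range m a b : 1 <= a -> b <= m.+1 -> rho_wordb m (rho_range a b).
Proof. by move=> H1 H2; apply: all_rho_range => j Hj /=; lia. Qed.

Lemma act_rho_range a b : a <= b -> act (rho_range a b) a = b.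
Proof.
elim: b => [|b IH] H; first by have -> : a = 0 by lia.
have [<-|ne] := eqVneq a b.+1; first by rewrite rho_range_nil.
by rewrite rho_rangeS /= ?IH; try lia; rewrite /swap eqxx.
Qed.

Lemma act_rho_range_fix a b k : (k < a) || (b < k) -> act (rho_range a b) k = k.
Proof.
elim: b => [|b IH] H; first by rewrite rho_range_nil //; lia.
have [Hab|Hab] := leqP b.+1 a; first by rewrite rho_range_nil.
by rewrite rho_rangeS /= ?IH /swap; try case_eqs; lia.
Qed.

Lemma rho_word_far_range i a b :
  (forall j, a <= j < b -> far i j) -> rho_word_far i (rho_range a b).
Proof. exact: all_rho_range. Qed.

Lemma rho_word_far_rev i c : rho_word_far i (rev c) = rho_word_far i c.
Proof. exact: all_rev. Qed.

Lemma rhos_range i j : rhos i j = rho_range i.+1 j.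
Proof. by rewrite /rhos /rho_range; congr (map _ (rev (iota _ _))); lia. Qed.

Lemma xw_lt i j : i < j -> xw i j = rho_range i.+1 j ++ sg i :: rev (rho_range i.+1 j).
Proof. by move=> H; rewrite /xw H rhos_range. Qed.

Lemma xw_gt i j : j < i ->
  xw i j = rho_range j.+1 i ++ rh j :: sg j :: rh j :: rev (rho_range j.+1 i).
Proof. by move=> H; rewrite /xw ltnNge (ltnW H) /= rhos_range. Qed.

Ltac solve_far := rewrite ?rho_word_far_rev; apply: rho_word_far_range => ? ?; apply/orP; lia.

Lemma rho_wordb_range_n a b : 1 <= a -> b <= n -> rho_wordb (n - 1) (rho_range a b).
Proof. by move=> H1 H2; apply: rho_wordb_range; lia. Qed.

Lemma rho_wordb_rev_range_n a b : 1 <= a -> b <= n ->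
  rho_wordb (n - 1) (rev (rho_range a b)).
Proof. by move=> H1 H2; rewrite rho_wordb_rev; apply: rho_wordb_range_n. Qed.

Lemma rho_range_shift c k b w : 1 <= c <= k -> k.+2 <= b <= n ->
  rh k :: rho_range c b ++ w ≡ rho_range c b ++ rh k.+1 :: w.
Proof.
move=> H1 H2.
rewrite (@rho_range_split c k.+2) ?(rho_rangeS (a := c)) -?catA; try lia.
rewrite (rho_comm_word (c := rho_range k.+2 b)) ?rho_wordb_range_n /=; try lia;
  last by solve_far.
rewrite rho_braid; try lia.
by rewrite (rho_comm_word (c := rho_range c k)) ?rho_wordb_range_n; try lia; last solve_far.
Qed.

Lemma rho_range_shift_rev c k b w : 1 <= c <= k -> k.+2 <= b <= n ->
  rh k.+1 :: rev (rho_range c b) ++ w ≡ rev (rho_range c b) ++ rh k :: w.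
Proof.
move=> H1 H2.
rewrite (@rho_range_split c k.+2) ?(rho_rangeS (a := c)); try lia.
rewrite rev_cat !rev_cons -!cats1 -!catA /=.
rewrite (rho_comm_word (c := rev (rho_range c k))) ?rho_wordb_rev_range_n; try lia;
  last by solve_far.
rewrite -rho_braid; try lia.
by rewrite (rho_comm_word (c := rev (rho_range k.+2 b))) ?rho_wordb_rev_range_n;
  try lia; last solve_far.
Qed.

Lemma rho_word_split_top m u : 1 <= m < n -> rho_wordb m u ->
  exists u' k, [/\ rho_wordb m.-1 u', 1 <= k <= m.+1 & u ≡ u' ++ rho_range k m.+1].
Proof.
move=> Hm; elim/last_ind: u => [|u l IH].
  by exists [::], m.+1; rewrite rho_range_nil //; split => //; lia.
rewrite -cats1 rho_wordb_cat => /andP [/IH [u' [k [Hu' Hk Eu]]]].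
case: l => [[i|i|j] f] //= /andP [Hi _].
suff [u'' [k' [Hu'' Hk' E]]] : exists u'' k', [/\ rho_wordb m.-1 u'',
    1 <= k' <= m.+1 & u' ++ rho_range k m.+1 ++ [:: rh i] ≡ u'' ++ rho_range k' m.+1].
  by exists u'', k'; split => //; rewrite Eu rho_letter -?catA //; lia.
have [Hik|Hki] := ltnP i.+1 k.
  exists (u' ++ [:: rh i]), k; split => //; first by rewrite rho_wordb_cat Hu' /=; lia.
  rewrite -catA /=; apply: cat_weq => //; symmetry.
  have := @rho_comm_word i (rho_range k m.+1) [::]; rewrite cats0; apply; try lia.
    by apply: rho_wordb_range_n; lia.
  by solve_far.
have [<-|ne] := eqVneq i.+1 k.
  exists u', i; split => //; first by lia.
  by rewrite (@rho_range_low i) -?catA //; lia.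
have [Eik|ne'] := eqVneq i k.
  exists u', k.+1; split => //; first by lia.
  by rewrite (@rho_range_low k) -?catA /= -?Eik ?rho_invo ?cats0 //; lia.
exists (u' ++ [:: rh i.-1]), k; split => //; first by rewrite rho_wordb_cat Hu' /=; lia.
rewrite -catA /=; apply: cat_weq => //; symmetry.
have := @rho_range_shift k i.-1 m.+1 [::]; rewrite cats0 prednK; last by lia.
by apply; lia.
Qed.

Lemma rho_word_faithful m u v : m <= n -> rho_wordb m.-1 u -> rho_wordb m.-1 v ->
  (forall k, 1 <= k <= m -> act u k = act v k) -> u ≡ v.
Proof.
elim: m u v => [|m IH] u v Hmn Hu Hv H.
  by rewrite (rho_wordb0 Hu) (rho_wordb0 Hv).
have [m0|Hm] := posnP m.
  by move: Hu Hv; rewrite m0 => /rho_wordb0 -> /rho_wordb0 ->.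
have Hm' : 1 <= m < n by lia.
have [u' [k [Hu' Hk Eu]]] := rho_word_split_top Hm' Hu.
have [v' [k' [Hv' Hk' Ev]]] := rho_word_split_top Hm' Hv.
(* The last factors agree since both words send k to m+1. *)
have top w' j : rho_wordb m.-1 w' -> 1 <= j <= m.+1 ->
    act (w' ++ rho_range j m.+1) j = m.+1.
  by move=> Hw' Hj; rewrite act_cat act_rho_range ?(act_rho_wordb_fix Hw'); lia.
have Ek : k = k'.
  apply: (@act_inj u); rewrite (weq_act Eu) top // H // (weq_act Ev) top //.
subst k'; rewrite Eu Ev; apply: cat_weq => //; apply: IH => //; first by lia.
move=> x Hx; have Hy : 1 <= act (rev (rho_range k m.+1)) x <= m.+1.
  apply: act_range; last by lia.
  by rewrite valid_rev; apply: rho_wordb_valid; apply: rho_wordb_range; lia.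
by have := H _ Hy; rewrite (weq_act Eu) (weq_act Ev) !act_cat act_revKV.
Qed.

(** * Conjugating the x_ij by rho-words *)

Definition rho_conj (k : nat) (u v : word) := forall w, rh k :: u ++ rh k :: w ≡ v ++ w.

Lemma rho_conj_sym k u v : 1 <= k <= n - 1 -> rho_conj k u v -> rho_conj k v u.
Proof. by move=> Hk H w; rewrite -H !rho_invo. Qed.

Lemma rho_conj_x_far a b k : a < b -> 1 <= a -> b <= n -> 1 <= k <= n - 1 ->
  (k.+2 <= a) || (b < k) -> rho_conj k (xw a b) (xw a b).
Proof.
move=> Hab Ha Hb Hk Hf w; rewrite xw_lt // -catA /=.
rewrite rho_comm_word ?rho_wordb_range_n //; try lia; last by solve_far.
rewrite -sigma_rho_comm; try lia; last by rewrite /far; case/orP: Hf; lia.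
by rewrite rho_comm_word ?rho_wordb_rev_range_n ?rho_invo -?catA //; try lia; last solve_far.
Qed.

Lemma rho_conj_x_mid a b k : 1 <= a -> a < k -> k.+2 <= b <= n ->
  rho_conj k (xw a b) (xw a b).
Proof.
move=> Ha Hak Hkb w; rewrite xw_lt -?catA /=; last by lia.
rewrite rho_range_shift -?sigma_rho_comm ?rho_range_shift_rev ?rho_invo //; try lia.
by rewrite /far; lia.
Qed.

Lemma rho_conj_x_pred a b : 1 <= a -> a.+1 < b <= n ->
  rho_conj a (xw a.+1 b) (xw a b).
Proof.
move=> Ha Hab w; rewrite !xw_lt ?(@rho_range_low a.+1 b) ?rev_cat -?catA /=; try lia.
rewrite rho_comm_word ?rho_wordb_range_n; try lia; last by solve_far.
rewrite -(rho_comm_word (c := rev (rho_range a.+2 b))) ?rho_wordb_rev_range_n;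
  try lia; last by solve_far.
by rewrite rho_sigma_shift //; lia.
Qed.

Lemma rho_conj_x_adj a : 1 <= a -> a < n -> rho_conj a (xw a a.+1) (xw a.+1 a).
Proof. by move=> Ha Han w; rewrite xw_lt // xw_gt // rho_range_nil. Qed.

Lemma rho_conj_x_succ a b : 1 <= a < b -> b < n -> rho_conj b (xw a b) (xw a b.+1).
Proof.
move=> Hab Hb w; rewrite !xw_lt ?rho_rangeS; try lia.
by rewrite rev_cons -cats1 -!catA !cat_cons -!catA.
Qed.

Lemma rho_conj_x_lt a b k : 1 <= a < b -> b <= n -> 1 <= k <= n - 1 ->
  rho_conj k (xw a b) (xw (swap k a) (swap k b)).
Proof.
move=> Hab Hb Hk.
have [Hfar|Hnear] := boolP ((k.+2 <= a) || (b < k)).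
  rewrite !swap_fix; try by apply/eqP; case/orP: Hfar; lia.
  by apply: rho_conj_x_far => //; lia.
have [Ea|Na] := eqVneq a k.+1.
  subst a; rewrite swap_r swap_fix; try by apply/eqP; lia.
  by apply: rho_conj_x_pred; lia.
have [Ek|Nk] := eqVneq k a.
  subst k; rewrite swap_l; have [Eb|Nb] := eqVneq b a.+1.
    by subst b; rewrite swap_r; apply: rho_conj_x_adj; lia.
  by rewrite swap_fix; try (apply/eqP; lia); apply/rho_conj_sym/rho_conj_x_pred; lia.
have [Eb|Nb] := eqVneq b k.+1.
  subst b; rewrite swap_r swap_fix; try by apply/eqP; lia.
  by apply/rho_conj_sym/rho_conj_x_succ; lia.
have [Eb'|Nb'] := eqVneq b k.
  by subst b; rewrite swap_l swap_fix; try (apply/eqP; lia); apply: rho_conj_x_succ; lia.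
rewrite !swap_fix; try by apply/eqP; lia.
by apply: rho_conj_x_mid; lia.
Qed.

Lemma xw_swap a b w : 1 <= b < a -> a <= n ->
  xw a b ++ w ≡ gm a :: gm b :: xw b a ++ gm b :: gm a :: w.
Proof.
move=> Hab Ha.
have Hr : rho_wordb (n - 1) (rho_range b.+1 a) by apply: rho_wordb_range_n; lia.
have Hr' : rho_wordb (n - 1) (rev (rho_range b.+1 a)) by rewrite rho_wordb_rev.
rewrite xw_gt ?xw_lt -?catA /= ?rho_sigma_rho; try lia.
rewrite (@rho_word_gamma (rho_range b.+1 a) b.+1) ?act_rho_range; try lia.
rewrite (@rho_word_gamma (rho_range b.+1 a) b) ?act_rho_range_fix ?ltnSn //; try lia.
rewrite (@gamma_rho_word (rev (rho_range b.+1 a)) b.+1) ?revK ?act_rho_range; try lia.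
rewrite (@gamma_rho_word (rev (rho_range b.+1 a)) b) ?revK ?act_rho_range_fix ?ltnSn //.
by lia.
Qed.

Lemma rho_conj_x a b k : a != b -> 1 <= a <= n -> 1 <= b <= n -> 1 <= k <= n - 1 ->
  rho_conj k (xw a b) (xw (swap k a) (swap k b)).
Proof.
move=> Nab Ha Hb Hk w; have [Hab|Hba|Eab] := ltngtP a b; last by rewrite Eab eqxx in Nab.
  by apply: rho_conj_x_lt; lia.
have Ha' := swap_range Hk Ha; have Hb' := swap_range Hk Hb.
have Nab' : swap k a != swap k b by rewrite (inj_eq (can_inj (swapK k))).
rewrite (xw_swap (rh k :: w)) ?(rho_gamma _ Hk Ha) ?(rho_gamma _ Hk Hb); try lia.
rewrite (gamma_rho _ Hk Ha) (gamma_rho _ Hk Hb) (@rho_conj_x_lt b a); try lia.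
have [Hab'|Hba'|Eab'] := ltngtP (swap k a) (swap k b); last by rewrite Eab' eqxx in Nab'.
  rewrite xw_swap -?catA /=; try lia.
  by rewrite !(gamma_invo (j := swap k b)) // !(gamma_invo (j := swap k a)).
by rewrite [X in _ ≡ X]xw_swap //; lia.
Qed.

Lemma sigma_conj_rho_word c i w : rho_wordb (n - 1) c -> 1 <= i <= n - 1 ->
  c ++ sg i :: winv c ++ w ≡ xw (act c i) (act c i.+1) ++ w.
Proof.
move=> Hc Hi; elim: c Hc w => [|[[j|j|j] f] c IH] //= Hc w.
  by rewrite xw_lt // rho_range_nil.
case/andP: Hc => Hj Hc; have Vc := rho_wordb_valid Hc.
rewrite winv_cons -!catA /= !rho_letter // IH //.
apply: rho_conj_x => //; try (apply: act_range => //; lia).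
by apply/eqP => /act_inj; lia.
Qed.

(** * Reidemeister-Schreier rewriting *)

Lemma gen_by_nil P : gen_by n P [::].
Proof. by exists [::]. Qed.

Lemma gen_by_cat P u v : gen_by n P u -> gen_by n P v -> gen_by n P (u ++ v).
Proof.
move=> [ws1 [H1 E1]] [ws2 [H2 E2]]; exists (ws1 ++ ws2); split.
  by move=> p /List.in_app_iff [/H1|/H2].
by rewrite map_cat flatten_cat E1 E2.
Qed.

Lemma gen_by_weq P u v : gen_by n P u -> u ≡ v -> gen_by n P v.
Proof. by move=> [ws [H E]] Euv; exists ws; split => //; rewrite -Euv. Qed.

Lemma gen_by_gen P (b : bool) y : P y -> gen_by n P (if b then winv y else y).
Proof. by move=> Hy; exists [:: (b, y)]; split => [p [<-|]|] //=; rewrite cats0. Qed.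

Lemma gen_by_winv P w : gen_by n P w -> gen_by n P (winv w).
Proof.
case=> ws [HP E]; apply: gen_by_weq (weq_winv (weq_sym E)).
elim: ws HP {E} => [|[b y] ws IH] HP /=; first exact: gen_by_nil.
rewrite winv_cat; apply: gen_by_cat; first by apply: IH => p Hp; apply: HP; right.
move: (gen_by_gen (~~ b) (HP _ (or_introl erefl))); clear HP IH.
by case: b; rewrite /= ?winvK.
Qed.

Lemma gamma_x_comm i j k w : 1 <= i < j -> j <= n -> 1 <= k <= n -> k != i -> k != j ->
  gm k :: xw i j ++ w ≡ xw i j ++ gm k :: w.
Proof.
move=> Hij Hj Hk Ni Nj; set r := rho_range i.+1 j.
have Hr : rho_wordb (n - 1) r by apply: rho_wordb_range_n; lia.
have Hr' : rho_wordb (n - 1) (rev r) by apply: rho_wordb_rev_range_n; lia.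
have Hk' : 1 <= act (rev r) k <= n.
  by apply: act_range => //; apply: rho_wordb_valid.
have Ek : act r (act (rev r) k) = k by rewrite act_revKV.
rewrite xw_lt -?catA /=; last by lia.
rewrite gamma_rho_word // gamma_sigma_comm //; try lia.
- by rewrite gamma_rho_word // revK Ek.
- by apply: contraNneq Ni => Ei; move: Ek; rewrite Ei act_rho_range_fix ?ltnSn // => ->.
- apply: contraNneq Nj => Ei; move: Ek; rewrite Ei act_rho_range => [->|] //; lia.
Qed.

Lemma gamma_conj_x_avoid i j s : 1 <= i < j -> j <= n ->
  all (fun k => [&& 1 <= k <= n, k != i & k != j]) s ->
  map gm s ++ xw i j ++ winv (map gm s) ≡ xw i j.
Proof.
move=> Hij Hj; elim: s => [|k s IH] /=; first by rewrite cats0.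
case/andP=> /and3P [Hk Ni Nj] Hs.
rewrite winv_cons (catA (xw i j)) (catA (map gm s)) IH //=.
by rewrite gamma_letter // gamma_x_comm // gamma_invo // cats0.
Qed.

Lemma hl_gen_conj_gammas i j (t : nat -> bool) : 1 <= i < j -> j <= n ->
  hl_gen n (conjw (xw i j) (gammas t [:: i; j])).
Proof.
move=> Hij Hj; exists i, j; split; try lia.
rewrite /gammas /=; case: (t i); case: (t j) => /=.
- exact: Or44.
- exact: Or42.
- exact: Or43.
- by apply: Or41; rewrite /conjw cats0.
Qed.

Lemma gamma_conj_x_gen g i j : gamma_wordb g -> 1 <= i < j -> j <= n ->
  gen_by n (hl_gen n) (g ++ xw i j ++ winv g).
Proof.
(* The gammas of g at i and j yield one of the four generators, the others commute
   with x_ij. *)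
move=> Hg Hij Hj.
set c := gammas (twist g) [:: i; j].
set t := fun k => [&& k != i, k != j & twist g k].
have Hc : gamma_wordb c.
  rewrite /gamma_wordb all_map; apply/allP => k; rewrite mem_filter !inE.
  by case/andP=> _ /orP [] /eqP -> /=; lia.
have Eg : g ≡ winv c ++ gamma_nf t.
  apply: gamma_weq => //; first by rewrite gamma_wordb_cat gamma_wordb_winv Hc gamma_wordb_nf.
  move=> k Hk; rewrite twist_cat_gamma ?gamma_wordb_nf // twist_winv_gamma //.
  rewrite twist_gammas ?twist_gamma_nf //=; last by rewrite inE; lia.
  by rewrite /t !inE; case: eqP => [->|]; case: eqP => [->|]; case: twist => //; lia.
apply: (gen_by_weq (gen_by_gen false (hl_gen_conj_gammas (twist g) Hij Hj))).
rewrite -/c [in X in _ ≡ X]Eg winv_cat winvK -!catA (catA (xw i j)) (catA (gamma_nf t)).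
rewrite gamma_conj_x_avoid //; apply/allP => k; rewrite mem_filter mem_iota /t.
by case/andP=> /and3P [-> -> _]; lia.
Qed.

Lemma sigma_conj_gen g c i : gamma_wordb g -> rho_wordb (n - 1) c -> 1 <= i <= n - 1 ->
  gen_by n (hl_gen n) (g ++ c ++ sg i :: winv c ++ winv g).
Proof.
move=> Hg Hc Hi; have Vc := rho_wordb_valid Hc.
set a := act c i; set b := act c i.+1.
have Ha : 1 <= a <= n by apply: act_range => //; lia.
have Hb : 1 <= b <= n by apply: act_range => //; lia.
have Nab : a != b by apply/eqP => /act_inj; lia.
apply: (@gen_by_weq _ (g ++ xw a b ++ winv g)); last by rewrite sigma_conj_rho_word.
have [Hab|Hba|Eab] := ltngtP a b; last by rewrite Eab eqxx in Nab.
  by apply: gamma_conj_x_gen => //; lia.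
have Hg' : gamma_wordb (g ++ [:: gm a; gm b]) by rewrite gamma_wordb_cat Hg /= Ha Hb.
apply: gen_by_weq (gamma_conj_x_gen Hg' (_ : 1 <= b < a) _) _; try lia.
rewrite (xw_swap (winv g)) ?winv_cat -?catA /= ?gamma_letter //; lia.
Qed.

Lemma schreier_decomposition w : valid n w ->
  exists h g c, [/\ gen_by n (hl_gen n) h, gamma_wordb g, rho_wordb (n - 1) c
    & w ≡ h ++ g ++ c].
Proof.
elim/last_ind: w => [|w l IH].
  by exists [::], [::], [::]; split => //; exact: gen_by_nil.
rewrite -cats1 valid_cat => /andP [/IH [h [g [c [Gh Hg Hc E]]]] Vl].
case: l Vl => [[i|i|j] f] /= /andP [Hl _].
- set z := g ++ c ++ sg i :: winv c ++ winv g.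
  exists (h ++ (if f then winv z else z)), g, c; split => //.
    by apply: gen_by_cat => //; case: f; [apply: gen_by_winv|]; apply: sigma_conj_gen.
  rewrite E -!catA; apply: cat_weq => //.
  have -> : (if f then winv z else z) = g ++ c ++ (Sig i, f) :: winv c ++ winv g.
    by case: f; rewrite /z // !winv_cat winv_cons !winv_cat !winvK -!catA.
  by rewrite -!catA cat_cons -catA catKw catVw.
- exists h, g, (c ++ [:: (Rho i, f)]); split => //.
    by rewrite rho_wordb_cat Hc /=; lia.
  by rewrite E -!catA.
- have Hj : 1 <= act c j <= n by apply: act_range => //; apply: rho_wordb_valid.
  exists h, (g ++ [:: gm (act c j)]), c; split => //.
    by rewrite gamma_wordb_cat Hg /= Hj.
  by rewrite E -!catA /= gamma_letter // rho_word_gamma // cats0.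
Qed.

(** * The homomorphism psi_H and its kernel *)

Definition psi (w : word) : word := gamma_nf (twist w).

Lemma gamma_wordb_psi w : gamma_wordb (psi w).
Proof. exact: gamma_wordb_nf. Qed.

Lemma twist_psi w k : 1 <= k <= n -> twist (psi w) k = twist w k.
Proof. exact: twist_gamma_nf. Qed.

Lemma psi_weq u v : u ≡ v -> psi u = psi v.
Proof. by move=> E; rewrite /psi /gamma_nf /gammas (eq_filter (weq_twist E)). Qed.

Lemma twist_cat_TVH u v k : in_TVH n v -> 1 <= k <= n ->
  twist (u ++ v) k = twist u k (+) twist v k.
Proof. by case=> _ Hv Hk; rewrite {1}/twist sact_cat !sactE Hv // addbC. Qed.

Lemma psi_cat u v : in_TVH n v -> psi (u ++ v) ≡ psi u ++ psi v.
Proof.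
move=> Tv; apply: gamma_weq => [||k Hk]; rewrite ?gamma_wordb_cat ?gamma_wordb_psi //.
by rewrite twist_cat_gamma ?gamma_wordb_psi // !twist_psi // twist_cat_TVH.
Qed.

Lemma sact_xw i j p : sact (xw i j) p = p.
Proof. by rewrite /xw; case: ifP => _; rewrite !sact_cat /= ?letter_actK sact_revKV. Qed.

Lemma psi_xw i j : psi (xw i j) = [::].
Proof.
rewrite /psi /gamma_nf /gammas (@eq_filter _ _ pred0) ?filter_pred0 // => k.
by rewrite /twist sact_xw.
Qed.

Lemma psi_gamma a : gamma_wordb a -> psi a ≡ a.
Proof. by move=> Ha; apply: gamma_weq => // [|k Hk]; rewrite ?gamma_wordb_psi ?twist_psi. Qed.

Lemma psi_nilP w : psi w ≡ [::] <-> (forall k, 1 <= k <= n -> twist w k = false).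
Proof.
split=> [E k Hk | H]; first by rewrite -twist_psi // (weq_twist E).
by apply: gamma_weq_nil => [|k Hk]; rewrite ?gamma_wordb_psi ?twist_psi ?H.
Qed.

Definition acts_trivially (w : word) : Prop :=
  forall k b, 1 <= k <= n -> sact w (k, b) = (k, b).

Definition ker_psi (w : word) : Prop := in_TVH n w /\ psi w ≡ [::].

Lemma ker_psiE w : ker_psi w <-> valid n w /\ acts_trivially w.
Proof.
rewrite /ker_psi psi_nilP; split => [[[Vw Aw] Tw]|[Vw Hw]].
  by split => // k b Hk; rewrite sactE Aw // Tw // addbF.
by split; [split=> // k Hk | move=> k Hk]; have := Hw k false Hk; rewrite sactE => -[].
Qed.

Lemma hl_gen_acts_trivially y p : hl_gen n y -> sact y p = p.
Proof.
case=> i [j [_ _ _ Hy]]; have Hc c : sact (conjw (xw i j) c) p = p.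
  by rewrite /conjw !sact_cat sact_xw sact_winv sact_revK.
by case: Hy => ->; rewrite ?sact_xw ?Hc.
Qed.

Lemma gen_by_acts_trivially w p : gen_by n (hl_gen n) w -> sact w p = p.
Proof.
case=> ws [HP E]; rewrite (weq_sact E).
elim: ws HP {E} => //= [[b y] ws IH] HP.
rewrite sact_cat IH; last by move=> q Hq; apply: HP; right.
move: (hl_gen_acts_trivially p (HP _ (or_introl erefl))) => /= Hy.
by case: b {HP}; rewrite /= ?sact_winv // -{1}Hy sact_revK.
Qed.

Lemma ker_psi_gen_by w : in_TVH n w -> ker_psi w <-> gen_by n (hl_gen n) w.
Proof.
move=> Tw; rewrite ker_psiE; split => [[Vw Hw] | Gw]; last first.
  by split; [case: Tw | move=> k b _; exact: gen_by_acts_trivially].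
have [h [g [c [Gh Hg Hc E]]]] := schreier_decomposition Vw.
have Hgc k : 1 <= k <= n -> act c k = k /\ twist g k = false.
  move=> Hk; have := weq_sact E (k, false).
  rewrite Hw // !sact_cat (gen_by_acts_trivially _ Gh) (sact_rho_word _ _ Hc) sact_gamma //.
  by case=> Ec Eg; rewrite -Ec in Eg.
have Cc : c ≡ [::].
  apply: (@rho_word_faithful n) => // [|k Hk]; first by rewrite -subn1.
  by case: (Hgc k Hk).
have Cg : g ≡ [::] by apply: gamma_weq_nil => // k Hk; case: (Hgc k Hk).
by apply: gen_by_weq Gh _; rewrite E Cg Cc !cats0.
Qed.

Lemma ker_psi_conjw w h : valid n w -> ker_psi h -> ker_psi (conjw h w).
Proof.
move=> Vw; rewrite !ker_psiE => -[Vh Hh]; split.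
  by rewrite /conjw !valid_cat valid_winv Vw Vh.
move=> k b Hk; rewrite /conjw !sact_cat sact_winv.
case E: (sact w (k, b)) => [k' b'].
have Hk' : 1 <= k' <= n by move: E; rewrite sactE => -[<- _]; apply: act_range.
by rewrite Hh // -E sact_revK.
Qed.

Lemma ker_psi_gamma a : gamma_wordb a -> ker_psi a -> a ≡ [::].
Proof. by move=> Ha [_ /psi_nilP Ht]; apply: gamma_weq_nil. Qed.

Lemma ker_psi_complement w : in_TVH n w -> ker_psi (w ++ winv (psi w)).
Proof.
move=> Tw; rewrite ker_psiE; split.
  case/gamma_wordP: (gamma_wordb_psi w) => Vp _.
  by rewrite valid_cat valid_winv Vp andbT; case: Tw.
move=> k b Hk; rewrite sact_cat sact_gamma ?gamma_wordb_winv ?gamma_wordb_psi //.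
rewrite twist_winv_gamma ?gamma_wordb_psi // twist_psi // sactE.
by case: Tw => _ ->; rewrite // -addbA addbb addbF.
Qed.

End TwistedVirtualBraidGroup.

Theorem mainTheorem11 (n : nat) (hn : 2 <= n) :
  exists psi : word -> word,
    (forall w, in_TVH n w -> gamma_word n (psi w)) /\
    (forall w1 w2, in_TVH n w1 -> in_TVH n w2 -> weq n w1 w2 ->
       weq n (psi w1) (psi w2)) /\
    (forall w1 w2, in_TVH n w1 -> in_TVH n w2 ->
       weq n (psi (w1 ++ w2)) (psi w1 ++ psi w2)) /\
    (forall k l, 1 <= k <= n -> 1 <= l <= n -> k <> l -> weq n (psi (xw k l)) [::]) /\
    (forall j, 1 <= j <= n -> weq n (psi [:: gm j]) [:: gm j]) /\
    (forall a, gamma_word n a -> weq n (psi a) a) /\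
    (let HL := fun w => in_TVH n w /\ weq n (psi w) [::] in
      (forall w, in_TVH n w -> (HL w <-> gen_by n (hl_gen n) w)) /\
      (forall w h, in_TVH n w -> HL h -> HL (conjw h w)) /\
      (forall a, gamma_word n a -> HL a -> weq n a [::]) /\
      (forall w, in_TVH n w ->
         exists h a, HL h /\ gamma_word n a /\ weq n w (h ++ a))).
Proof.
(* The argument works for every n. *)
exists (psi n); split; first by move=> w _; apply/gamma_wordP/gamma_wordb_psi.
split; first by move=> w1 w2 _ _ /psi_weq ->.
split; first by move=> w1 w2 _; exact: psi_cat.
split; first by move=> k l _ _ _; rewrite psi_xw.
split; first by move=> j Hj; apply: psi_gamma; rewrite /gamma_wordb /= Hj.
split; first by move=> a /gamma_wordP; exact: psi_gamma.
move=> HL; split; first exact: ker_psi_gen_by.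
split; first by move=> w h [Vw _]; exact: ker_psi_conjw.
split; first by move=> a /gamma_wordP; exact: ker_psi_gamma.
move=> w Tw; exists (w ++ winv (psi n w)), (psi n w); split; first exact: ker_psi_complement.
split; first exact/gamma_wordP/gamma_wordb_psi.
by rewrite -catA catVw cats0.
Qed.
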